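(* Let $f:X\to Y$ be a continuous map admitting a continuous section $s:Y\to X$ ($f\circ s=\mathrm{id}_Y$) such that for each $y\in Y$, $s(y)$ belongs to every open subset $U\subseteq X$ with $U\cap f^{-1}(y)\neq\emptyset$. Then $f\in\{M\}^{lr}$; equivalently, for every topological space $B$ and every closed subset $A\subseteq B$, the inclusion $A\hookrightarrow B$ has the left lifting property with respect to $f$. Here $M:D\to E$ is the map with $D=\{x,y,z,c\}$ having open sets $\emptyset,\{x,y,z\},D$, $E=\{u,v\}$ antidiscrete, $M(x)=M(y)=u$, $M(z)=M(c)=v$.
   Context: For continuous maps $f:A\to B$, $g:C\to D'$, $f\pitchfork g$ (left lifting property of $f$ with respect to $g$) means: for all continuous $t:A\to C$, $b:B\to D'$ with $g\circ t=b\circ f$ there is continuous $d:B\to C$ with $d\circ f=t$, $g\circ d=b$. For a class $P$, $P^l=\{f: f\pitchfork g\ \forall g\in P\}$, $P^r=\{g: f\pitchfork g\ \forall f\in P\}$, $P^{lr}=(P^l)^r$. *)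

From HB Require Import structures.
From mathcomp Require Import all_boot all_order all_algebra.
From mathcomp Require Import all_classical all_reals all_analysis.

Set Implicit Arguments.
Unset Strict Implicit.
Unset Printing Implicit Defensive.

Local Open Scope classical_set_scope.

Definition llp {A B C D' : topologicalType} (f : A -> B) (g : C -> D') : Prop :=
  forall (t : A -> C) (b : B -> D'), continuous t -> continuous b ->
    g \o t = b \o f ->
    exists d : B -> C, [/\ continuous d, d \o f = t & g \o d = b].

(** The space D = {x,y,z,c}, encoded as bool * bool with
    x = (false,false), y = (false,true), z = (true,false), c = (true,true);
    open sets: set0, {x,y,z}, D. *)
Definition Dsp : Type := (bool * bool)%type.
HB.instance Definition _ := Choice.on Dsp.

Definition Dxyz : set Dsp := [set p | p <> (true, true)].
Definition Dop : set_system Dsp :=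
  [set U | U = set0 \/ U = Dxyz \/ U = setT].

Lemma DopT : Dop setT. Proof. by right; right. Qed.

Lemma DopI : setI_closed Dop.
Proof.
move=> U V [->|[->|->]] [->|[->|->]];
  rewrite ?set0I ?setI0 ?setIT ?setTI ?setIid;
  by [left | right; left | right; right].
Qed.

Lemma Dop_bigU (I : Type) (f : I -> set Dsp) :
  (forall i, Dop (f i)) -> Dop (\bigcup_i f i).
Proof.
move=> fop.
case: (pselect (exists i, f i = setT)) => [[i fi]|nT].
  right; right; apply/seteqP; split => // p _; exists i => //; by rewrite fi.
case: (pselect (exists i, f i = Dxyz)) => [[i fi]|nV].
  right; left; apply/seteqP; split.
    move=> p [j _ fjp]; have [fj|[fj|fj]] := fop j.
    - by move: fjp; rewrite fj.
    - by move: fjp; rewrite fj.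
    - by exfalso; apply: nT; exists j.
  by move=> p Vp; exists i => //; rewrite fi.
left; apply/seteqP; split => // p [j _ fjp]; have [fj|[fj|fj]] := fop j.
- by move: fjp; rewrite fj.
- by exfalso; apply: nV; exists j.
- by exfalso; apply: nT; exists j.
Qed.

HB.instance Definition _ := isOpenTopological.Build Dsp DopT DopI Dop_bigU.

(** The antidiscrete space E = {u,v}, encoded as bool (u = false, v = true). *)
Definition Esp : Type := bool.
HB.instance Definition _ := Choice.on Esp.

Definition Eop : set_system Esp := [set U | U = set0 \/ U = setT].

Lemma EopT : Eop setT. Proof. by right. Qed.

Lemma EopI : setI_closed Eop.
Proof.
move=> U V [->|->] [->|->]; rewrite ?set0I ?setI0 ?setIT ?setTI;
  by [left | right].
Qed.

Lemma Eop_bigU (I : Type) (f : I -> set Esp) :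
  (forall i, Eop (f i)) -> Eop (\bigcup_i f i).
Proof.
move=> fop.
case: (pselect (exists i, f i = setT)) => [[i fi]|nT].
  right; apply/seteqP; split => // p _; exists i => //; by rewrite fi.
left; apply/seteqP; split => // p [j _ fjp]; have [fj|fj] := fop j.
- by move: fjp; rewrite fj.
- by exfalso; apply: nT; exists j.
Qed.

HB.instance Definition _ := isOpenTopological.Build Esp EopT EopI Eop_bigU.

Definition M (p : Dsp) : Esp := p.1.

Definition in_M_l {A B : topologicalType} (f : A -> B) : Prop :=
  continuous f /\ llp f M.

Definition in_M_lr {C D' : topologicalType} (g : C -> D') : Prop :=
  continuous g /\
  forall (A B : topologicalType) (f : A -> B), in_M_l f -> llp f g.

From HB Require Import structures.
From mathcomp Require Import all_boot all_order all_algebra.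
From mathcomp Require Import all_classical all_reals all_analysis.

(** Both halves of the theorem reduce to one fact: every injective closed map
    [g : A -> B] lifts against [f].  Given a square [f \o t = b \o g], define
    the lift to be [t] on the image of [g] and [s \o b] off it.  The preimage
    of an open [U] is then [(s \o b)^-1 U] minus the closed set
    [g (A \ t^-1 U)]: a point [g a] with [t a] in [U] lies in [(s \o b)^-1 U]
    because [U] meets the fibre of [b (g a)] at [t a], and [s] picks a point of
    that fibre lying in every such [U].  Maps in [{M}^l] are injective and
    closed: testing against [M] with maps into the indiscrete part [{x,y}]
    separates points, and sending a closed [F] to [c] and its complement to [x]
    yields a lift whose preimage of the closed point [c] is [g F]. *)

Set Implicit Arguments.
Unset Strict Implicit.
Unset Printing Implicit Defensive.

Local Open Scope classical_set_scope.

Definition closed_map {A B : topologicalType} (g : A -> B) : Prop :=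
  forall F : set A, closed F -> closed (g @` F).

Section lift_along_closed_injection.
Context {X Y A B : topologicalType} (f : X -> Y) (s : Y -> X) (g : A -> B).
Hypotheses (s_cont : continuous s) (sK : cancel s f).
Hypothesis s_generic : forall (y : Y) (U : set X),
  open U -> (U `&` f @^-1` [set y]) !=set0 -> U (s y).
Hypotheses (g_inj : injective g) (g_closed : closed_map g).
Variables (t : A -> X) (b : B -> Y).
Hypotheses (t_cont : continuous t) (b_cont : continuous b).
Hypothesis ftE : forall a, f (t a) = b (g a).

Definition lift (x : B) : X :=
  if pselect (exists a, g a = x) is left ex then t (projT1 (cid ex))
  else s (b x).

Lemma lift_image a : lift (g a) = t a.
Proof.
rewrite /lift; case: pselect => [ex|]; last by case; exists a.
by case: (cid ex) => a' /= /g_inj ->.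
Qed.

Lemma lift_notin_image x : ~ (exists a, g a = x) -> lift x = s (b x).
Proof. by rewrite /lift; case: pselect. Qed.

Lemma preimage_lift (U : set X) : open U ->
  lift @^-1` U = b @^-1` (s @^-1` U) `&` ~` (g @` ~` (t @^-1` U)).
Proof.
move=> oU; apply/seteqP; split => x /=.
- case: (pselect (exists a, g a = x)) => [[a <-]|gx]; last first.
    by rewrite lift_notin_image //; split => // -[a _ gax]; apply: gx; exists a.
  rewrite lift_image => Uta; split; last by case=> a' /[swap] /g_inj ->.
  by apply: s_generic => //; exists (t a); split => //=; rewrite ftE.
- move=> [Usb nUt]; case: (pselect (exists a, g a = x)) => [[a gax]|gx].
    by rewrite -gax lift_image; apply: contrapT => Uta; apply: nUt; exists a.
  by rewrite lift_notin_image.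
Qed.

Lemma lift_continuous : continuous lift.
Proof.
apply/continuousP => U oU; rewrite preimage_lift //; apply: openI.
  by move/continuousP: b_cont; apply; move/continuousP: s_cont; apply.
apply/closed_openC/g_closed/open_closedC.
by move/continuousP: t_cont; apply.
Qed.

Lemma f_lift x : f (lift x) = b x.
Proof.
case: (pselect (exists a, g a = x)) => [[a <-]|gx].
  by rewrite lift_image ftE.
by rewrite lift_notin_image.
Qed.

End lift_along_closed_injection.

Lemma llp_closed_injection {X Y A B : topologicalType}
    (f : X -> Y) (s : Y -> X) (g : A -> B) :
  continuous s -> cancel s f ->
  (forall (y : Y) (U : set X), open U -> (U `&` f @^-1` [set y]) !=set0 ->
     U (s y)) ->
  injective g -> closed_map g -> llp g f.
Proof.
move=> s_cont sK s_generic g_inj g_closed t b t_cont b_cont ftb.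
have ftE a : f (t a) = b (g a) by have := congr1 (@^~ a) ftb.
exists (lift s g t b); split.
- exact: (lift_continuous s_cont s_generic g_inj g_closed t_cont b_cont ftE).
- by apply/funext => a /=; rewrite (lift_image _ g_inj).
- by apply/funext => x /=; rewrite (f_lift sK g_inj ftE).
Qed.

Lemma continuous_to_Dsp (T : topologicalType) (t : T -> Dsp) :
  open (t @^-1` Dxyz) -> continuous t.
Proof.
move=> oDxyz; apply/continuousP => U [->|[->|->]] //.
- by rewrite preimage_set0; exact: open0.
- by rewrite preimage_setT; exact: openT.
Qed.

Lemma continuous_to_Esp (T : topologicalType) (b : T -> Esp) : continuous b.
Proof.
apply/continuousP => U [->|->].
- by rewrite preimage_set0; exact: open0.
- by rewrite preimage_setT; exact: openT.
Qed.

Lemma llp_M_injective (A B : topologicalType) (g : A -> B) :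
  llp g M -> injective g.
Proof.
move=> gM a1 a2 g12.
pose t (a : A) : Dsp := (false, `[< a = a1 >]).
have t_cont : continuous t.
  apply: continuous_to_Dsp.
  by rewrite (_ : _ @^-1` _ = setT); [exact: openT | apply/seteqP; split].
have b_cont : continuous (fun _ : B => false : Esp) by exact: continuous_to_Esp.
have [d [_ dg _]] := gM t _ t_cont b_cont erefl.
have dgE a : d (g a) = t a by have := congr1 (@^~ a) dg.
have := dgE a2; rewrite -g12 dgE /t (asboolT erefl).
by case=> /esym/asboolP.
Qed.

Lemma llp_M_closed_map (A B : topologicalType) (g : A -> B) :
  llp g M -> closed_map g.
Proof.
move=> gM F F_closed; have g_inj := llp_M_injective gM.
pose t (a : A) : Dsp := (`[< F a >], `[< F a >]).
have t_cont : continuous t.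
  apply: continuous_to_Dsp; rewrite (_ : _ @^-1` _ = ~` F).
    exact: closed_openC.
  by apply/seteqP; split => a /=; rewrite /t; case: asboolP.
pose b (x : B) : Esp := `[< (g @` F) x >].
have Mtb : M \o t = b \o g.
  apply/funext => a; rewrite /M /b /t /=; congr asbool; apply/propext.
  by split => [Fa|[a' Fa' /g_inj <-//]]; exists a.
have b_cont : continuous b by exact: continuous_to_Esp.
have [d [d_cont dg Md]] := gM t b t_cont b_cont Mtb.
rewrite (_ : g @` F = ~` (d @^-1` Dxyz)); last first.
  apply/seteqP; split => x /=.
    move=> [a Fa <-]; have /= -> := congr1 (@^~ a) dg.
    by rewrite /t asboolT.
  move=> /contrapT dx; have := congr1 (@^~ x) Md.
  by rewrite /= dx /M /b => /esym/asboolP.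
by apply: open_closedC; move/continuousP: d_cont; apply; right; left.
Qed.

Lemma closed_map_set_val (B : topologicalType) (A : set B) :
  closed A -> closed_map (set_val : set_type A -> B).
Proof.
move=> A_closed F /closed_openC [W oW WF].
rewrite (_ : set_val @` F = A `&` ~` W).
  by apply: closedI => //; exact: open_closedC.
apply/seteqP; split => [x [a Fa <-]|x [Ax nWx]].
  split; first exact: set_mem (valP a).
  by move=> Wa; have : (~` F) a by rewrite -WF.
exists (exist _ x (mem_set Ax)) => //; apply: contrapT => nFx.
by apply: nWx; have : (set_val @^-1` W) (exist _ x (mem_set Ax)) by rewrite WF.
Qed.

Theorem mainTheorem7 (X Y : topologicalType) (f : X -> Y) (s : Y -> X) :
  continuous f -> continuous s -> (forall y, f (s y) = y) ->
  (forall (y : Y) (U : set X), open U -> (U `&` f @^-1` [set y]) !=set0 ->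
     U (s y)) ->
  in_M_lr f /\
  (forall (B : topologicalType) (A : set B), closed A ->
     llp (set_val : set_type A -> B) f).
Proof.
move=> f_cont s_cont sK s_generic; split.
  split=> // A B g [_ gM]; apply: (llp_closed_injection s_cont sK s_generic).
  - exact: llp_M_injective.
  - exact: llp_M_closed_map.
move=> B A A_closed; apply: (llp_closed_injection s_cont sK s_generic).
- exact: val_inj.
- exact: closed_map_set_val.
Qed.
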